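(* Under the hypotheses of the preceding statement ($\mu$-weakly convex $f$ with $\alpha$-sharp minimum on closed convex $Q$, initial point with $\min_{x_*\in X_*}\|x^0-x_*\|_2\le\alpha\gamma/\mu$ for some $\gamma\in(0,1)$, projected subgradient method with Polyak step $h_k=(f(x^k)-f^* )/\|\nabla f(x^k)\|_2^2$, iterates $x^0,\dots,x^k\notin X_*$), assume in addition that $f$ is $M$-Lipschitz. Then $$\min_{x_*\in X_*}\|x^{k+1}-x_*\|_2^2\le\Bigl(1-\frac{\alpha^2(1-\gamma)}{M^2}\Bigr)^{k+1}\min_{x_*\in X_*}\|x^0-x_*\|_2^2.$$
   Context: $f$ is $\mu$-weakly convex if $x\mapsto f(x)+\frac{\mu}{2}\|x\|_2^2$ is convex; subgradients are taken in the sense $f(y)\ge f(x)+\langle v,y-x\rangle+o(\|y-x\|_2)$. $X_*$ is the set of minimizers of $f$ on $Q$, $f^*=\min_Q f$, $\operatorname{Pr}_Q$ the Euclidean projection. *)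

From mathcomp Require Import all_boot all_order all_algebra.
From mathcomp Require Import boolp classical_sets reals.
Set Implicit Arguments. Unset Strict Implicit. Unset Printing Implicit Defensive.
Import Order.TTheory GRing.Theory Num.Theory.
Local Open Scope ring_scope.
Local Open Scope classical_set_scope.

Section Euclid.
Variables (R : realType) (n : nat).
Local Notation V := 'rV[R]_n.

Definition dotp (u v : V) : R := \sum_(i < n) u ord0 i * v ord0 i.
Definition enorm (u : V) : R := Num.sqrt (dotp u u).

Definition edist (x : V) (A : set V) : R := inf [set enorm (x - y) | y in A].

Definition convex_set (Q : set V) : Prop :=
  forall x y (t : R), Q x -> Q y -> 0 <= t <= 1 -> Q (t *: x + (1 - t) *: y).

Definition closed_set (Q : set V) : Prop :=
  forall x, (forall e : R, 0 < e -> exists2 y, Q y & enorm (x - y) < e) -> Q x.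

Definition convex_fun (g : V -> R) : Prop :=
  forall x y (t : R), 0 <= t <= 1 ->
    g (t *: x + (1 - t) *: y) <= t * g x + (1 - t) * g y.

Definition weakly_convex (mu : R) (f : V -> R) : Prop :=
  convex_fun (fun x => f x + mu / 2 * enorm x ^+ 2).

(* v is a subgradient of f at x:
   f y >= f x + <v, y - x> + o(||y - x||) *)
Definition subgradient (f : V -> R) (x v : V) : Prop :=
  forall e : R, 0 < e -> exists2 d : R, 0 < d & forall y,
    enorm (y - x) < d -> f x + dotp v (y - x) - e * enorm (y - x) <= f y.

Definition lipschitz (M : R) (f : V -> R) : Prop :=
  forall x y, `|f x - f y| <= M * enorm (x - y).

Definition is_proj (Q : set V) (x p : V) : Prop :=
  Q p /\ forall q, Q q -> enorm (x - p) <= enorm (x - q).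

Definition is_min_value (f : V -> R) (Q : set V) (fstar : R) : Prop :=
  (exists2 x, Q x & f x = fstar) /\ forall y, Q y -> fstar <= f y.

Definition argmin_set (f : V -> R) (Q : set V) (fstar : R) : set V :=
  [set x | Q x /\ f x = fstar].

Definition sharp_min (alpha : R) (f : V -> R) (Q : set V) (fstar : R) : Prop :=
  forall x, Q x -> alpha * edist x (argmin_set f Q fstar) <= f x - fstar.

End Euclid.

(* A Polyak step with stepsize h = (f x - f* ) / |g|^2 satisfies, for every
   minimizer y, |x+ - y|^2 <= (1 + h mu) |x - y|^2 - h (f x - f* ): the
   projection onto Q does not move away from y, and the weak-convexity
   subgradient inequality bounds <g, x - y> from below.  Passing to the
   distance d to X_*, sharpness and mu d <= alpha gamma give
   f x - f* - mu d^2 >= alpha (1 - gamma) d, while Lipschitz continuity gives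
   |g| <= M, hence h >= alpha d / M^2.  So d+^2 <= (1 - alpha^2 (1 - gamma) / M^2) d^2,
   the iterates stay in the region d <= alpha gamma / mu, and induction on k
   concludes. *)

From mathcomp Require Import all_boot all_order all_algebra.
From mathcomp Require Import boolp classical_sets reals.
From mathcomp Require Import ring lra.
Set Implicit Arguments. Unset Strict Implicit.
Import Order.TTheory GRing.Theory Num.Theory.
Local Open Scope ring_scope.
Local Open Scope classical_set_scope.

Section EuclideanGeometry.
Variables (R : realType) (n : nat).
Local Notation V := 'rV[R]_n.
Implicit Types (u v w : V) (A : set V).

Lemma dotpC u v : dotp u v = dotp v u.
Proof. by apply: eq_bigr => i _; rewrite mulrC. Qed.

Lemma dotpDl u v w : dotp (u + v) w = dotp u w + dotp v w.
Proof. by rewrite /dotp -big_split; apply: eq_bigr => i _; rewrite !mxE mulrDl. Qed.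

Lemma dotpDr u v w : dotp w (u + v) = dotp w u + dotp w v.
Proof. by rewrite dotpC dotpDl !(dotpC w). Qed.

Lemma dotpZl (a : R) u v : dotp (a *: u) v = a * dotp u v.
Proof. by rewrite /dotp mulr_sumr; apply: eq_bigr => i _; rewrite !mxE mulrA. Qed.

Lemma dotpZr (a : R) u v : dotp v (a *: u) = a * dotp v u.
Proof. by rewrite dotpC dotpZl dotpC. Qed.

Lemma dotpNl u v : dotp (- u) v = - dotp u v.
Proof. by rewrite -scaleN1r dotpZl mulN1r. Qed.

Lemma dotpNr u v : dotp v (- u) = - dotp v u.
Proof. by rewrite dotpC dotpNl dotpC. Qed.

Lemma dotppD u v : dotp (u + v) (u + v) = dotp u u + 2 * dotp u v + dotp v v.
Proof. by rewrite !dotpDl !dotpDr (dotpC v u); ring. Qed.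

Lemma dotppB u v : dotp (u - v) (u - v) = dotp u u - 2 * dotp u v + dotp v v.
Proof. by rewrite dotppD dotpNr dotpNl dotpNr opprK; ring. Qed.

Lemma dotpp_ge0 u : 0 <= dotp u u.
Proof. by apply: sumr_ge0 => i _; rewrite -expr2 sqr_ge0. Qed.

Lemma dotpp_eq0 u : dotp u u = 0 -> u = 0.
Proof.
move=> u0; apply/matrixP => i j; rewrite !mxE ord1.
have /psumr_eq0P sq0 : \sum_(k < n) u ord0 k ^+ 2 = 0.
  by rewrite -[RHS]u0; apply: eq_bigr => k _; rewrite expr2.
by apply/eqP; rewrite -sqrf_eq0; apply/eqP/sq0 => // k _; rewrite sqr_ge0.
Qed.

Lemma enorm_ge0 u : 0 <= enorm u.
Proof. exact: sqrtr_ge0. Qed.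

Lemma enorm_sqr u : enorm u ^+ 2 = dotp u u.
Proof. by rewrite sqr_sqrtr // dotpp_ge0. Qed.

Lemma enormZ (a : R) u : 0 <= a -> enorm (a *: u) = a * enorm u.
Proof.
move=> a0; rewrite /enorm dotpZl dotpZr mulrA sqrtrM ?mulr_ge0 //.
by rewrite -expr2 sqrtr_sqr ger0_norm.
Qed.

Lemma edist_le x A y : A y -> edist x A <= enorm (x - y).
Proof.
move=> Ay; apply: ge_inf; last by exists y.
by exists 0 => _ [z _ <-]; exact: enorm_ge0.
Qed.

Lemma lb_le_edist x A (r : R) : A !=set0 ->
  (forall y, A y -> r <= enorm (x - y)) -> r <= edist x A.
Proof.
move=> [y Ay] lb; apply: lb_le_inf; first by exists (enorm (x - y)), y.
by move=> _ [z Az <-]; exact: lb.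
Qed.

Lemma edist_ge0 x A : A !=set0 -> 0 <= edist x A.
Proof. by move=> A0; apply: lb_le_edist => // y _; exact: enorm_ge0. Qed.

(* The infimum defining [edist] need not be attained, so a bound holding at
   every point of [A] is passed to the distance through a square root. *)
Lemma le_edist_sqr x A (a K C : R) : A !=set0 -> 0 <= K ->
  (forall y, A y -> a <= K * enorm (x - y) ^+ 2 + C) ->
  a <= K * edist x A ^+ 2 + C.
Proof.
move=> A0 K0 bnd; rewrite -lerBlDr.
have [aC0|aCpos] := lerP (a - C) 0.
  by apply: le_trans aC0 _; rewrite mulr_ge0 ?sqr_ge0.
have Kpos : 0 < K.
  case: A0 => y /bnd; rewrite lt_neqAle K0 andbT; apply: contraTneq => <-.
  by rewrite mul0r add0r; lra.
set s := Num.sqrt ((a - C) / K).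
have s2 : s ^+ 2 = (a - C) / K by rewrite sqr_sqrtr // divr_ge0 ?ltW.
have s0 : 0 <= s := sqrtr_ge0 _.
have sd : s <= edist x A.
  apply: lb_le_edist => // y /bnd ay; have := enorm_ge0 (x - y).
  have : s ^+ 2 <= enorm (x - y) ^+ 2 by rewrite s2 ler_pdivrMr // mulrC; lra.
  nra.
have : s ^+ 2 <= edist x A ^+ 2 by rewrite ler_sqr ?nnegrE // (le_trans s0).
by rewrite s2 ler_pdivrMr // mulrC.
Qed.

End EuclideanGeometry.

Section ConvexAnalysis.
Variables (R : realType) (n : nat).
Local Notation V := 'rV[R]_n.

Lemma convex_subgradient_le (phi : V -> R) x w y : convex_fun phi ->
  subgradient phi x w -> phi x + dotp w (y - x) <= phi y.
Proof.
move=> cvx sg; apply/ler_addgt0Pr => e' e'0.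
set r := enorm (y - x); have r0 : 0 <= r := enorm_ge0 _.
set e := e' / (r + 1).
have e0 : 0 < e by rewrite divr_gt0 // ltr_wpDl.
have er : e * r <= e' by rewrite /e mulrAC ler_pdivrMr ?ltr_wpDl //; nra.
have [del del0 loc] := sg e e0.
set t := del / (del + r).
have t0 : 0 < t by rewrite divr_gt0 // ltr_wpDr.
have tr : t * (del + r) = del by rewrite /t mulfVK // gt_eqF // ltr_wpDr.
set z := t *: y + (1 - t) *: x.
have zx : z - x = t *: (y - x).
  by rewrite /z scalerBl scale1r scalerBr addrCA addrAC subrr add0r.
have nz : enorm (z - x) = t * r by rewrite zx enormZ // ltW.
have := loc z; rewrite nz zx dotpZr => /(_ ltac:(nra)) locz.
have := cvx y x t; rewrite ltW //= => /(_ ltac:(nra)) cvxz.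
have : t * (phi x + dotp w (y - x) - e * r - phi y) <= 0 by lra.
by rewrite pmulr_rle0 //; lra.
Qed.

Lemma subgradient_add_sqr (f : V -> R) (c : R) x g : 0 <= c ->
  subgradient f x g ->
  subgradient (fun z => f z + c * enorm z ^+ 2) x (g + (2 * c) *: x).
Proof.
move=> c0 sg e e0; have [del del0 loc] := sg e e0.
exists del => // z /loc locz.
have expand : dotp z z = dotp x x + 2 * dotp x (z - x) + dotp (z - x) (z - x).
  by rewrite -dotppD addrC subrK.
have := dotpp_ge0 (z - x).
rewrite !enorm_sqr dotpDl dotpZl expand; nra.
Qed.

Lemma weakly_convex_subgradient_le (mu : R) (f : V -> R) x g y :
  0 <= mu -> weakly_convex mu f -> subgradient f x g ->
  f x + dotp g (y - x) - mu / 2 * dotp (y - x) (y - x) <= f y.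
Proof.
move=> mu0 wc sg.
have sg' := subgradient_add_sqr (divr_ge0 mu0 (ler0n _ 2)) sg.
have := convex_subgradient_le y wc sg'; rewrite [2 * _]mulrC divfK ?pnatr_eq0 //.
have expand : dotp y y = dotp x x + 2 * dotp x (y - x) + dotp (y - x) (y - x).
  by rewrite -dotppD addrC subrK.
rewrite !enorm_sqr dotpDl dotpZl expand; lra.
Qed.

Lemma is_proj_obtuse (Q : set V) z p y : convex_set Q -> is_proj Q z p -> Q y ->
  dotp (z - p) (y - p) <= 0.
Proof.
move=> cQ [Qp minp] Qy.
set B := dotp (z - p) (y - p); set E := dotp (y - p) (y - p).
have E0 : 0 <= E := dotpp_ge0 _.
have small_t t : 0 < t -> t <= 1 -> 2 * B <= t * E.
  move=> t0 t1; have /minp : Q (t *: y + (1 - t) *: p) by apply: cQ; rewrite // ltW.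
  have -> : z - (t *: y + (1 - t) *: p) = (z - p) - t *: (y - p).
    by apply/matrixP => i j; rewrite !mxE; ring.
  move=> le_norm.
  have : dotp (z - p) (z - p) <= dotp (z - p - t *: (y - p)) (z - p - t *: (y - p)).
    by rewrite -!enorm_sqr; have := enorm_ge0 (z - p); nra.
  rewrite (dotppB (z - p)) dotpZr dotpZl dotpZr -/B -/E => le_sqr.
  have : t * (2 * B - t * E) <= 0 by nra.
  by rewrite pmulr_rle0 //; lra.
rewrite leNgt; apply/negP => Bpos.
have BE : 0 < B + E by rewrite ltr_wpDr.
have := small_t (B / (B + E)); rewrite divr_gt0 // ler_pdivrMr // mul1r lerDl.
move=> /(_ isT E0).
have : B / (B + E) * (B + E) = B by rewrite mulfVK // gt_eqF.
nra.
Qed.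

Lemma is_proj_dotpp_le (Q : set V) z p y : convex_set Q -> is_proj Q z p -> Q y ->
  dotp (p - y) (p - y) <= dotp (z - y) (z - y).
Proof.
move=> cQ pr Qy.
have -> : z - y = (z - p) + (p - y) by rewrite addrA subrK.
rewrite (dotppD (z - p)) (_ : dotp (z - p) (p - y) = - dotp (z - p) (y - p)).
  by have := is_proj_obtuse cQ pr Qy; have := dotpp_ge0 (z - p); lra.
by rewrite -dotpNr opprB.
Qed.

Lemma lipschitz_subgradient_le (M : R) (f : V -> R) x g : lipschitz M f ->
  subgradient f x g -> 0 < enorm g -> enorm g <= M.
Proof.
move=> lip sg g0; apply/ler_addgt0Pr => e e0.
have [del del0 loc] := sg e e0.
set t := del / (2 * enorm g).
have t0 : 0 < t by rewrite divr_gt0 // mulr_gt0.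
have tg : t * enorm g = del / 2.
  by rewrite /t mulrAC -mulf_div divff ?gt_eqF // mulr1 mulrC.
have step : x + t *: g - x = t *: g by rewrite addrC addKr.
have nstep : enorm (t *: g) = del / 2 by rewrite enormZ ?ltW.
have := loc (x + t *: g); rewrite step nstep dotpZr -enorm_sqr => /(_ ltac:(lra)).
have := lip (x + t *: g) x; rewrite step nstep => /(le_trans (ler_norm _)).
have : t * enorm g ^+ 2 = del / 2 * enorm g by rewrite expr2 mulrA tg.
move=> sq lipx locx.
have : del / 2 * (enorm g - e - M) <= 0 by nra.
by rewrite pmulr_rle0 ?divr_gt0 //; lra.
Qed.

End ConvexAnalysis.

Definition polyak_step (R : realType) (n : nat) (f : 'rV[R]_n -> R) (fstar : R)
  (x g : 'rV[R]_n) : R := (f x - fstar) / enorm g ^+ 2.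

Section PolyakStep.
Variables (R : realType) (n : nat) (f : 'rV[R]_n -> R) (Q : set 'rV[R]_n).
Variables (mu alpha gamma M fstar : R).
Hypotheses (mu_gt0 : 0 < mu) (alpha_gt0 : 0 < alpha) (gamma01 : 0 < gamma < 1).
Hypotheses (wconvex_f : weakly_convex mu f) (convex_Q : convex_set Q).
Hypotheses (min_fstar : is_min_value f Q fstar) (sharp_f : sharp_min alpha f Q fstar).
Hypothesis (lipschitz_f : lipschitz M f).

Local Notation X := (argmin_set f Q fstar).

Lemma argmin_set_neq0 : X !=set0.
Proof. by case: min_fstar => -[y Qy fy] _; exists y. Qed.

Lemma gap_ge0 x : Q x -> 0 <= f x - fstar.
Proof. by case: min_fstar => _ minf /minf; rewrite subr_ge0. Qed.

Lemma gap_gt0 x : Q x -> ~ X x -> 0 < f x - fstar.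
Proof.
move=> Qx nXx; rewrite lt_neqAle gap_ge0 // andbT eq_sym subr_eq0.
by apply/eqP => fx; apply: nXx.
Qed.

Lemma gap_le_subgradient x g y : subgradient f x g -> X y ->
  f x - fstar - mu / 2 * enorm (x - y) ^+ 2 <= dotp g (x - y).
Proof.
move=> sg [_ <-]; have := weakly_convex_subgradient_le y (ltW mu_gt0) wconvex_f sg.
by rewrite enorm_sqr -(opprB x y) dotpNr dotpNl dotpNr opprK; lra.
Qed.

Lemma sharp_le_lipschitz x : Q x -> ~ X x -> alpha <= M.
Proof.
move=> Qx nXx; have F0 := gap_gt0 Qx nXx.
have gap_le y : X y -> f x - fstar <= M * enorm (x - y).
  by case=> _ <-; apply: le_trans (lipschitz_f x y); exact: ler_norm.
have M0 : 0 < M.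
  case: argmin_set_neq0 => y /gap_le; have := enorm_ge0 (x - y); nra.
have : (f x - fstar) / M <= edist x X.
  apply: lb_le_edist argmin_set_neq0 _ => y /gap_le.
  by rewrite ler_pdivrMr // mulrC.
rewrite ler_pdivrMr // => Md; have := sharp_f Qx; nra.
Qed.

(* A vanishing subgradient would make [f x - fstar <= mu / 2 * d ^+ 2], which
   the sharpness and the bound on [d] push below [gamma / 2 * (f x - fstar)]. *)
Lemma subgradient_neq0 x g : Q x -> ~ X x -> subgradient f x g ->
  edist x X <= alpha * gamma / mu -> 0 < dotp g g.
Proof.
move=> Qx nXx sg dle; rewrite lt_neqAle dotpp_ge0 andbT eq_sym.
apply/eqP => /dotpp_eq0 g0.
have F0 := gap_gt0 Qx nXx; have d0 := edist_ge0 x argmin_set_neq0.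
have : f x - fstar <= mu / 2 * edist x X ^+ 2 + 0.
  apply: le_edist_sqr argmin_set_neq0 _ _; first by rewrite divr_ge0 ?ltW.
  move=> y /(gap_le_subgradient sg); rewrite g0 /dotp big1 ?addr0 => [|i _]; first lra.
  by rewrite mxE mul0r.
have : mu * edist x X <= alpha * gamma by rewrite mulrC -ler_pdivlMr.
have := sharp_f Qx; case/andP: gamma01; nra.
Qed.

Lemma polyak_dist_sqr_le x g z : Q x -> subgradient f x g -> 0 < dotp g g ->
  is_proj Q (x - polyak_step f fstar x g *: g) z ->
  edist z X ^+ 2 <= (1 + polyak_step f fstar x g * mu) * edist x X ^+ 2
                    - polyak_step f fstar x g * (f x - fstar).
Proof.
move=> Qx sg G0 pr; rewrite /polyak_step enorm_sqr in pr *.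
set F := f x - fstar in pr *; set h := F / dotp g g in pr *.
have h0 : 0 <= h by rewrite divr_ge0 ?gap_ge0 ?ltW.
have hG : h * dotp g g = F by rewrite mulfVK ?gt_eqF.
apply: le_edist_sqr argmin_set_neq0 _ _ => [|y Xy].
  by rewrite addr_ge0 // mulr_ge0 // ltW.
have Qy : Q y by case: Xy.
have dz : edist z X ^+ 2 <= enorm (z - y) ^+ 2.
  by rewrite ler_sqr ?nnegrE ?enorm_ge0 ?edist_ge0 ?edist_le //; exact: argmin_set_neq0.
apply: le_trans dz _; rewrite !enorm_sqr.
apply: le_trans (is_proj_dotpp_le convex_Q pr Qy) _.
rewrite (_ : x - h *: g - y = (x - y) - h *: g); last first.
  by apply/matrixP => i j; rewrite !mxE; ring.
rewrite dotppB dotpZr dotpZl dotpZr (dotpC (x - y)).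
have := gap_le_subgradient sg Xy; rewrite enorm_sqr -/F; nra.
Qed.

Lemma polyak_step_contracts x g z : Q x -> ~ X x -> subgradient f x g ->
  is_proj Q (x - polyak_step f fstar x g *: g) z ->
  edist x X <= alpha * gamma / mu ->
  edist z X ^+ 2 <= (1 - alpha ^+ 2 * (1 - gamma) / M ^+ 2) * edist x X ^+ 2.
Proof.
move=> Qx nXx sg pr dle.
have G0 := subgradient_neq0 Qx nXx sg dle.
apply: le_trans (polyak_dist_sqr_le Qx sg G0 pr) _.
rewrite /polyak_step enorm_sqr.
set F := f x - fstar; set G := dotp g g; set d := edist x X.
have F0 : 0 < F := gap_gt0 Qx nXx.
have d0 : 0 <= d := edist_ge0 x argmin_set_neq0.
have alpha_d : alpha * d <= F := sharp_f Qx.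
have mu_d : mu * d <= alpha * gamma by rewrite mulrC -ler_pdivlMr.
have GM : G <= M ^+ 2.
  have /(lipschitz_subgradient_le lipschitz_f sg) : 0 < enorm g.
    by rewrite -(@sqrtr_gt0 _ G) in G0.
  by rewrite /G -enorm_sqr; have := enorm_ge0 g; nra.
have M0 : 0 < M ^+ 2 by apply: lt_le_trans GM.
have hG : F / G * G = F by rewrite mulfVK ?gt_eqF.
set h := F / G in hG *.
have h0 : 0 <= h by rewrite divr_ge0 ?ltW.
set W := alpha * (1 - gamma) * d.
have gamma1 : 0 <= 1 - gamma by case/andP: gamma01; lra.
have W0 : 0 <= W by rewrite /W !mulr_ge0 // ltW.
have gap_W : W <= F - mu * d ^+ 2 by rewrite /W; nra.
have hM_W : alpha * d * W <= h * M ^+ 2 * W.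
  by apply: ler_wpM2r => //; apply: le_trans alpha_d _; rewrite -hG ler_wpM2l.
have : alpha ^+ 2 * (1 - gamma) / M ^+ 2 * d ^+ 2 <= h * W.
  rewrite mulrAC ler_pdivrMr //.
  have -> : alpha ^+ 2 * (1 - gamma) * d ^+ 2 = alpha * d * W by rewrite /W; ring.
  by rewrite [h * W * _]mulrAC.
nra.
Qed.

End PolyakStep.

Unset Implicit Arguments. Set Strict Implicit.

Theorem corollary2 (R : realType) (n : nat) (f : 'rV[R]_n -> R)
    (Q : set 'rV[R]_n) (mu alpha gamma M fstar : R)
    (x g : nat -> 'rV[R]_n) (k : nat) :
  0 < mu -> 0 < alpha -> 0 < gamma < 1 ->
  weakly_convex mu f ->
  Q !=set0 -> convex_set Q -> closed_set Q ->
  is_min_value f Q fstar ->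
  sharp_min alpha f Q fstar ->
  lipschitz M f ->
  Q (x 0%N) ->
  edist (x 0%N) (argmin_set f Q fstar) <= alpha * gamma / mu ->
  (forall i, (i <= k)%N -> subgradient f (x i) (g i)) ->
  (forall i, (i <= k)%N ->
     is_proj Q (x i - ((f (x i) - fstar) / enorm (g i) ^+ 2) *: g i) (x i.+1)) ->
  (forall i, (i <= k)%N -> ~ argmin_set f Q fstar (x i)) ->
  edist (x k.+1) (argmin_set f Q fstar) ^+ 2 <=
    (1 - alpha ^+ 2 * (1 - gamma) / M ^+ 2) ^+ k.+1 *
    edist (x 0%N) (argmin_set f Q fstar) ^+ 2.
Proof.
move=> mu0 alpha0 gamma01 wc _ cQ _ minf sharp lip Qx0 d0_le sg pr nX.
set X := argmin_set f Q fstar in d0_le nX *.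
set c := 1 - alpha ^+ 2 * (1 - gamma) / M ^+ 2.
have X0 : X !=set0 := argmin_set_neq0 minf.
have alphaM := sharp_le_lipschitz minf sharp lip Qx0 (nX 0%N isT).
have M0 : 0 < M := lt_le_trans alpha0 alphaM.
have [g0 g1] := andP gamma01.
have ratio_ge0 : 0 <= alpha ^+ 2 * (1 - gamma) / M ^+ 2.
  by rewrite divr_ge0 ?mulr_ge0 ?sqr_ge0 //; lra.
have ratio_le1 : alpha ^+ 2 * (1 - gamma) / M ^+ 2 <= 1.
  rewrite ler_pdivrMr ?exprn_gt0 // mul1r.
  have : alpha ^+ 2 <= M ^+ 2 by rewrite ler_sqr // nnegrE ltW.
  have := sqr_ge0 alpha; nra.
have c0 : 0 <= c by rewrite /c; lra.
have c1 : c <= 1 by rewrite /c; lra.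
suff inv i : (i <= k.+1)%N -> Q (x i) /\ edist (x i) X ^+ 2 <= c ^+ i * edist (x 0%N) X ^+ 2.
  by case: (inv k.+1 (leqnn _)).
elim: i => [_|i IH /ltnSE ik]; first by rewrite expr0 mul1r.
have [Qxi di_le] := IH (leqW ik).
have di_d0 : edist (x i) X <= edist (x 0%N) X.
  rewrite -ler_sqr ?nnegrE ?edist_ge0 //; apply: le_trans di_le _.
  by rewrite ler_piMl ?sqr_ge0 ?exprn_ile1.
split; first by case: (pr i ik).
apply: le_trans (polyak_step_contracts mu0 alpha0 gamma01 wc cQ minf sharp lip
  Qxi (nX i ik) (sg i ik) (pr i ik) (le_trans di_d0 d0_le)) _.
by rewrite -/X -/c [c ^+ _]exprS -mulrA; apply: ler_wpM2l.
Qed.
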